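(* Fix an integer $k \geq 1$ and let $V=\{0,\ldots,k\}$. Let $\varphi$ be a nondegenerate monotone Boolean function on $V$. Then $$\mathrm{eul}(\varphi) = \mu_{\mathrm{CNF}}(\hat{0},\hat{1}) = (-1)^k\, \mu_{\mathrm{DNF}}(\hat{0},\hat{1}),$$ where $\mu_{\mathrm{CNF}}$ (resp. $\mu_{\mathrm{DNF}}$) is the Möbius function of the CNF lattice $L^\varphi_{\mathrm{CNF}}$ (resp. the DNF lattice $L^\varphi_{\mathrm{DNF}}$) of $\varphi$, and $\hat{0}$, $\hat{1}$ denote the least and greatest elements of the respective lattice.
   Context: A valuation of $V$ is a subset $\nu\subseteq V$; for $l\in V$, $\nu^{(l)}$ denotes $\nu$ with the membership of $l$ flipped. A Boolean function on $V$ is a map $\varphi:2^V\to\{\text{false},\text{true}\}$; $\nu\models\varphi$ means $\varphi(\nu)=\text{true}$. It is monotone if $\nu\subseteq\nu'$ and $\nu\models\varphi$ imply $\nu'\models\varphi$. $\varphi$ depends on $l$ if $\varphi(\nu)\neq\varphi(\nu^{(l)})$ for some $\nu$; $\mathrm{dep}(\varphi)$ is the set of such $l$; $\varphi$ is nondegenerate if $\mathrm{dep}(\varphi)=V$. The Euler characteristic is $\mathrm{eul}(\varphi)=\sum_{\nu\models\varphi}(-1)^{|\nu|}$. A monotone $\varphi$ has a unique minimized CNF $C_0\wedge\cdots\wedge C_n$ and a unique minimized DNF $C'_0\vee\cdots\vee C'_m$ (no clause containing another), each clause viewed as the set of its variables. The CNF lattice $L^\varphi_{\mathrm{CNF}}$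 is the poset whose elements are the sets $d_{\mathbf s}=\bigcup_{i\in\mathbf s}C_i$ for $\mathbf s\subseteq\{0,\ldots,n\}$, ordered by reversed set inclusion; its greatest element $\hat 1$ is $\emptyset$ and its least element $\hat0$ is $\mathrm{dep}(\varphi)$. The DNF lattice $L^\varphi_{\mathrm{DNF}}$ is defined identically from the DNF clauses $C'_i$ (sets $d'_{\mathbf s}=\bigcup_{i\in\mathbf s}C'_i$, reversed inclusion). For a finite poset $P$, the Möbius function is defined on pairs $u\leq v$ by $\mu_P(u,u)=1$ and $\mu_P(u,v)=-\sum_{u<w\leq v}\mu_P(w,v)$ for $u<v$. *)

From mathcomp Require Import all_boot all_order all_algebra.
Set Implicit Arguments. Unset Strict Implicit. Unset Printing Implicit Defensive.
Import GRing.Theory Num.Theory.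
Local Open Scope ring_scope.

Section BoolFun.
Variable V : finType.

(* valuations are {set V}; a Boolean function is a map {set V} -> bool *)
Definition flip (nu : {set V}) (l : V) : {set V} :=
  if l \in nu then nu :\ l else l |: nu.

Definition monotone (phi : {set V} -> bool) : Prop :=
  forall nu nu' : {set V}, nu \subset nu' -> phi nu -> phi nu'.

Definition depends_on (phi : {set V} -> bool) (l : V) : Prop :=
  exists nu : {set V}, phi nu != phi (flip nu l).

Definition nondeg_bf (phi : {set V} -> bool) : Prop :=
  forall l : V, depends_on phi l.

Definition eul (phi : {set V} -> bool) : int :=
  \sum_(nu : {set V} | phi nu) (-1) ^+ #|nu|.

Definition antichain (F : {set {set V}}) : Prop :=
  forall C D, C \in F -> D \in F -> C \subset D -> C = D.

Definition is_min_CNF (phi : {set V} -> bool) (F : {set {set V}}) : Prop :=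
  antichain F /\ forall nu, phi nu = [forall C in F, [exists x in C, x \in nu]].

Definition is_min_DNF (phi : {set V} -> bool) (F : {set {set V}}) : Prop :=
  antichain F /\ forall nu, phi nu = [exists C in F, C \subset nu].

Definition clause_lattice (F : {set {set V}}) : {set {set V}} :=
  [set (\bigcup_(C in s) C : {set V}) | s : {set {set V}} in powerset F].

(* least element hat0 (union of all clauses) and greatest element hat1 = set0
   for the reversed inclusion order *)
Definition hat0 (F : {set {set V}}) : {set V} := \bigcup_(C in F) C.
Definition hat1 : {set V} := set0.
Arguments hat1 : clear implicits.

(* Moebius function of the poset L ordered by reversed inclusion
   (u <= v iff v \subset u), computed with fuel:
   mu(u,u) = 1, mu(u,v) = - \sum_(u < w <= v) mu(w,v) for u < v, 0 otherwise. *)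
Fixpoint mob_fuel (L : {set {set V}}) (n : nat) (u v : {set V}) : int :=
  match n with
  | 0%N => 0
  | n'.+1 =>
      if u == v then 1
      else if v \proper u then
        - \sum_(w in L | (v \subset w) && (w \proper u)) mob_fuel L n' w v
      else 0
  end.

Definition mobius (L : {set {set V}}) (u v : {set V}) : int :=
  mob_fuel L #|u|.+1 u v.

End BoolFun.

From mathcomp Require Import all_boot all_order all_algebra.
Import GRing.Theory Num.Theory.
Local Open Scope ring_scope.

(* Expanding "every clause meets nu" by inclusion-exclusion writes the Euler
   characteristic of a CNF as the signed count of the families of clauses whose
   union is all of V.  The same signed counts, indexed by the union u, invert
   the zeta function of the lattice of unions of clauses as soon as no clause is
   empty, so they are the Moebius values mu(u, hat1); at u = hat0 = V this is
   the first equality.  For the DNF, nu falsifies phi exactly when its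
   complement meets every DNF clause; complementation multiplies signs by
   (-1)^(k+1), and eul phi = - eul (~~ phi) because the signs of all valuations
   sum to 0.  Nondegeneracy is what makes hat0 = V and rules out empty clauses. *)

Lemma sum_sign_subset {T : finType} (A : {set T}) :
  \sum_(s : {set T} | s \subset A) (-1) ^+ #|s| = (A == set0)%:R :> int.
Proof.
(* The left side is the expansion of \prod_i (1 - [i \in A]) over subsets. *)
transitivity (\sum_(s : {set T}) \prod_(i in s) - (i \in A)%:R : int).
  rewrite big_mkcond; apply: eq_bigr => s _; case: (boolP (s \subset A)) => sA.
    by rewrite -prodr_const; apply: eq_bigr => i /(subsetP sA) ->.
  by case/subsetPn: sA => i si iA; rewrite (bigD1 i) //= (negbTE iA) oppr0 mul0r.
under eq_bigr => s _ do rewrite big_mkcond /=.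
rewrite -(bigA_distr 1 +%R) /=.
case: (set_0Vmem A) => [-> | [a aA]].
  by rewrite eqxx big1 // => i _; rewrite inE oppr0 add0r.
have /negbTE -> : A != set0 by apply/set0Pn; exists a.
by rewrite (bigD1 a) //= aA addNr mul0r.
Qed.

Section BooleanFunctions.
Context {T : finType}.
Local Set Implicit Arguments.
Local Unset Strict Implicit.
Implicit Types (F L s : {set {set T}}) (nu u v w : {set T}).

Lemma eul_compl (phi psi : {set T} -> bool) :
  (0 < #|T|)%N -> (forall nu, ~~ phi nu = psi (~: nu)) ->
  eul phi = - (-1) ^+ #|T| * eul psi.
Proof.
move=> /card_gt0P[x _] phiC.
have sum_all : \sum_(nu : {set T}) (-1) ^+ #|nu| = 0%R :> int.
  rewrite -(eq_bigl _ _ (@subsetT _)) sum_sign_subset.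
  by have /negbTE -> : [set: T] != set0 by apply/set0Pn; exists x; rewrite inE.
have sum_notphi : \sum_(nu | ~~ phi nu) (-1) ^+ #|nu| = (-1) ^+ #|T| * eul psi.
  rewrite (eq_bigl _ _ phiC) (reindex_inj (@setC_inj _)) /= /eul big_distrr /=.
  apply: eq_big => [nu | nu _]; first by rewrite setCK.
  by rewrite -(cardsC nu) exprD mulrC signrMK.
have sum_split : eul phi + \sum_(nu | ~~ phi nu) (-1) ^+ #|nu| = 0.
  by rewrite -[RHS]sum_all [RHS](bigID phi).
by apply/eqP; rewrite mulNr -sum_notphi -addr_eq0 sum_split.
Qed.

Definition hits F nu : bool := [forall C in F, [exists x in C, x \in nu]].

Definition contains_clause F nu : bool := [exists C in F, C \subset nu].

Lemma contains_clauseC F nu : ~~ contains_clause F nu = hits F (~: nu).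
Proof.
rewrite negb_exists; apply: eq_forallb => C; rewrite negb_and implybE; congr (_ || _).
by apply/subsetPn/exists_inP => -[x xC]; rewrite ?inE; exists x; rewrite ?inE.
Qed.

Lemma hits_setIcover F nu : hits F (nu :&: cover F) = hits F nu.
Proof.
apply: eq_forallb_in => C CF; apply: eq_existsb_in => x xC.
by rewrite inE (subsetP (bigcup_sup C CF)) ?andbT.
Qed.

Lemma contains_clause_setIcover F nu :
  contains_clause F (nu :&: cover F) = contains_clause F nu.
Proof.
by apply: eq_existsb_in => C CF; rewrite subsetI (bigcup_sup C CF) andbT.
Qed.

Lemma hits_set0 F nu : set0 \in F -> hits F nu = false.
Proof. by move=> F0; apply/forall_inP => /(_ _ F0)/exists_inP[x]; rewrite inE. Qed.

Lemma contains_clause_set0 F nu : set0 \in F -> contains_clause F nu.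
Proof. by move=> F0; apply/exists_inP; exists set0; rewrite ?sub0set. Qed.

Lemma subset_powerset_cover s (A : {set T}) :
  (s \subset powerset A) = (cover s \subset A).
Proof.
by apply/subsetP/bigcupsP => sub C /sub; rewrite powersetE.
Qed.

Lemma hits_sign_sum F nu :
  (hits F nu)%:R = \sum_(s : {set {set T}} | (s \subset F) && (cover s \subset ~: nu))
                      (-1) ^+ #|s| :> int.
Proof.
pose G := F :&: powerset (~: nu).
have subG (s : {set {set T}}) :
    (s \subset G) = (s \subset F) && (cover s \subset ~: nu).
  by rewrite subsetI subset_powerset_cover.
rewrite -(eq_bigl _ _ subG) sum_sign_subset; congr (nat_of_bool _)%:R.
rewrite /hits; apply/forall_inP/eqP => [hitsF | G0 C CF].
  apply/setP => C; rewrite !inE andbC.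
  case: (boolP (C \in F)) => [CF|]; rewrite ?andbF // andbT.
  case/exists_inP: (hitsF C CF) => x xC xnu.
  by apply/negbTE/subsetPn; exists x; rewrite ?inE ?xnu.
have : C \notin G by rewrite G0 inE.
rewrite !inE CF /= => /subsetPn[x xC].
by rewrite inE negbK => xnu; apply/exists_inP; exists x.
Qed.

Definition signed_covers F (u : {set T}) : int :=
  \sum_(s : {set {set T}} | (s \subset F) && (cover s == u)) (-1) ^+ #|s|.

Lemma eul_hits F : eul (hits F) = signed_covers F setT.
Proof.
rewrite /eul big_mkcond /=.
under eq_bigr => nu _ do
  rewrite -mulrb -mulr_natl hits_sign_sum big_distrl big_mkcond /=.
rewrite exchange_big /signed_covers [RHS]big_mkcond /=.
apply: eq_bigr => s _; case: (boolP (s \subset F)) => sF /=; last by rewrite big1.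
rewrite -big_mkcond /= -big_distrr /= (eq_bigl _ _ (fun nu => subsetC _ nu)).
by rewrite sum_sign_subset -subset0 -setCT setCS subTset mulr_natr mulrb.
Qed.

Lemma cover_clause_lattice F s : s \subset F -> cover s \in clause_lattice F.
Proof. by move=> sF; apply/imsetP; exists s; rewrite ?powersetE. Qed.

Lemma sum_signed_covers_below F u :
  set0 \notin F -> u \in clause_lattice F ->
  \sum_(w in clause_lattice F | w \subset u) signed_covers F w = (u == set0)%:R.
Proof.
move=> F0 /imsetP[s0]; rewrite powersetE => s0F ->; rewrite -/(cover s0).
pose G := F :&: powerset (cover s0).
have subG (s : {set {set T}}) :
    (s \subset G) = (s \subset F) && (cover s \subset cover s0).
  by rewrite subsetI subset_powerset_cover.
transitivity (\sum_(s : {set {set T}} | s \subset G) (-1) ^+ #|s| : int); last first.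
  rewrite sum_sign_subset; congr (nat_of_bool _)%:R; apply/eqP/eqP => [G0 | cover0].
    have : s0 \subset G by rewrite subG s0F subxx.
    by rewrite G0 subset0 => /eqP ->; apply: big_set0.
  apply/setP => C; rewrite !inE cover0 subset0 andbC.
  by case: eqP => // ->; apply/negbTE.
rewrite (eq_bigl _ _ subG) (partition_big cover
  (fun w => (w \in clause_lattice F) && (w \subset cover s0))) /=; last first.
  by move=> s /andP[sF ->]; rewrite cover_clause_lattice.
apply: eq_bigr => w /andP[_ wu]; apply: eq_bigl => s.
by case: eqP => [->|]; rewrite ?wu ?andbT ?andbF.
Qed.

Lemma depends_on_support (phi : {set T} -> bool) (A : {set T}) l :
  (forall nu, phi (nu :&: A) = phi nu) -> depends_on phi l -> l \in A.
Proof.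
move=> phiA [nu]; apply: contraNT => lA.
have flipA : flip nu l :&: A = nu :&: A.
  apply/setP => x; rewrite /flip; case: ifP => _; rewrite !inE.
    by case: eqVneq => [->|]; rewrite ?(negbTE lA) ?andbF.
  by case: eqVneq => [->|]; rewrite ?(negbTE lA) ?andbF.
by rewrite -(phiA nu) -(phiA (flip nu l)) flipA eqxx.
Qed.

Lemma nondeg_supportT (phi : {set T} -> bool) (A : {set T}) :
  nondeg_bf phi -> (forall nu, phi (nu :&: A) = phi nu) -> A = setT.
Proof.
by move=> nd phiA; apply/setP => l; rewrite inE (depends_on_support phiA (nd l)).
Qed.

Lemma nondeg_nonconst (phi : {set T} -> bool) (b : bool) :
  (0 < #|T|)%N -> nondeg_bf phi -> ~ (forall nu, phi nu = b).
Proof.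
move=> /card_gt0P[x _] nd phib.
have phi_set0 nu : phi (nu :&: set0) = phi nu by rewrite !phib.
by have /setP/(_ x) := nondeg_supportT nd phi_set0; rewrite !inE.
Qed.

Lemma mob_fuel_enough L n m u v :
  (#|u| < n)%N -> (#|u| < m)%N -> mob_fuel L n u v = mob_fuel L m u v.
Proof.
elim: n m u => [|n IH] [|m] u //= hn hm.
case: eqP => // _; case: ifP => // _; congr (- _).
apply: eq_bigr => w /andP[_ /andP[_ /proper_card wu]].
by apply: IH; apply: leq_trans wu _.
Qed.

Lemma mobius_set0_rec L u :
  u != set0 -> mobius L u set0 = - \sum_(w in L | w \proper u) mobius L w set0.
Proof.
move=> u0; rewrite {1}/mobius /= (negbTE u0) proper0 u0; congr (- _).
apply: eq_big => [w | w /andP[_ /andP[_ /proper_card wu]]]; first by rewrite sub0set.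
exact: mob_fuel_enough.
Qed.

Lemma mobius_set0_eq L (g : {set T} -> int) :
  {in L, forall u, \sum_(w in L | w \subset u) g w = (u == set0)%:R} ->
  {in L, forall u, mobius L u set0 = g u}.
Proof.
move=> gsum u; have [n] := ubnP #|u|; elim: n u => // n IH u hu uL.
have := gsum u uL; case: (eqVneq u set0) => [u0 | u_neq0].
  subst u; rewrite (big_pred1 set0) => [-> | w]; first by rewrite /mobius /= eqxx.
  by rewrite subset0 andb_idl // => /eqP ->.
rewrite (bigD1 u) /=; last by rewrite uL subxx.
rewrite mobius_set0_rec // => /eqP; rewrite addr_eq0 => /eqP ->; congr (- _).
apply: eq_big => [w | w /andP[wL wu]]; first by rewrite properEneq andbA andbAC.
by apply: IH wL; apply: leq_trans (proper_card wu) _.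
Qed.

Lemma mobius_clause_lattice F :
  set0 \notin F ->
  {in clause_lattice F, forall u,
    mobius (clause_lattice F) u set0 = signed_covers F u}.
Proof. by move=> F0; apply: mobius_set0_eq => u; apply: sum_signed_covers_below. Qed.

End BooleanFunctions.

Theorem lemma3p8 (k : nat) (hk : (1 <= k)%N)
  (phi : {set 'I_k.+1} -> bool)
  (hmon : monotone phi) (hnd : nondeg_bf phi)
  (cnf dnf : {set {set 'I_k.+1}})
  (hcnf : is_min_CNF phi cnf) (hdnf : is_min_DNF phi dnf) :
  eul phi = mobius (clause_lattice cnf) (hat0 cnf) (hat1 _) /\
  mobius (clause_lattice cnf) (hat0 cnf) (hat1 _)
    = (-1) ^+ k * mobius (clause_lattice dnf) (hat0 dnf) (hat1 _).
Proof.
have hT : (0 < #|'I_k.+1|)%N by rewrite card_ord.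
have hc : phi =1 hits cnf := hcnf.2.
have hd : phi =1 contains_clause dnf := hdnf.2.
have cover_cnf : cover cnf = setT.
  by apply: (nondeg_supportT hnd) => nu; rewrite !hc hits_setIcover.
have cover_dnf : cover dnf = setT.
  by apply: (nondeg_supportT hnd) => nu; rewrite !hd contains_clause_setIcover.
have cnf0 : set0 \notin cnf.
  apply/negP => /hits_set0 F0.
  by apply: (nondeg_nonconst hT hnd) => nu; rewrite hc F0.
have dnf0 : set0 \notin dnf.
  apply/negP => /contains_clause_set0 F0.
  by apply: (nondeg_nonconst hT hnd) => nu; rewrite hd F0.
have mob_cnf : mobius (clause_lattice cnf) (hat0 cnf) (hat1 _) = signed_covers cnf setT.
  by rewrite -cover_cnf; apply: mobius_clause_lattice cnf0 _ (cover_clause_lattice _).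
have mob_dnf : mobius (clause_lattice dnf) (hat0 dnf) (hat1 _) = signed_covers dnf setT.
  by rewrite -cover_dnf; apply: mobius_clause_lattice dnf0 _ (cover_clause_lattice _).
have eul_cnf : eul phi = signed_covers cnf setT by rewrite -eul_hits; apply: eq_bigl.
have eul_dnf : eul phi = (-1) ^+ k * signed_covers dnf setT.
  rewrite (eul_compl (psi := hits dnf)) ?eul_hits ?card_ord ?exprS ?mulN1r ?opprK //.
  by move=> nu; rewrite hd contains_clauseC.
by rewrite mob_cnf mob_dnf -eul_cnf eul_dnf.
Qed.
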